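(* Let $k\ge 1$ be the cache size. Considering all request sequences, with no restriction on which pages may follow which (equivalently, the complete access graph), \[ \mathcal{I}[\mathrm{FIFO},\mathrm{LRU}]=\left[-1+\frac{1}{k},\ \frac{1}{2}-\frac{1}{4k-2}\right]. \]
   Context: Paging: a cache holds at most $k$ pages and is initially empty. A request sequence is a finite sequence of pages. A request to a page in the cache is a hit; otherwise it is a fault, the page is brought into the cache, and if the cache is full some page is evicted first. $\mathcal{A}(I)$ denotes the number of faults of algorithm $\mathcal{A}$ on $I$. LRU evicts the cached page whose most recent request is earliest. FIFO evicts the cached page that entered the cache earliest. Relative interval: for algorithms $\mathcal{A},\mathcal{B}$ and a set of allowed sequences (here all sequences), let $\mathrm{Min}_{\mathcal{A},\mathcal{B}}(n)=\min_{|I|=n}\{\mathcal{A}(I)-\mathcal{B}(I)\}$ and $\mathrm{Max}_{\mathcal{A},\mathcal{B}}(n)=\max_{|I|=n}\{\mathcal{A}(I)-\mathcal{B}(I)\}$, the min/max being over allowed sequences of length $n$; $\mathrm{Min}(\mathcal{A},\mathcal{B})=\liminf_{n\to\infty}\mathrm{Min}_{\mathcal{A},\mathcal{B}}(n)/n$, $\mathrm{Max}(\mathcal{A},\mathcal{B})=\limsup_{n\to\infty}\mathrm{Max}_{\mathcal{A},\mathcal{B}}(n)/n$, and $\mathcal{I}[\mathcal{A},\mathcal{B}]=[\mathrm{Min}(\mathcal{A},\mathcal{B}),\mathrm{Max}(\mathcal{A},\mathcal{B})]$. *)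

From mathcomp Require Import all_boot all_order all_algebra.
From mathcomp Require Import all_classical all_reals all_analysis.
Set Implicit Arguments. Unset Strict Implicit. Unset Printing Implicit Defensive.
Import Order.TTheory GRing.Theory Num.Theory.

(* A cache is represented as a list of (distinct) pages.
   - LRU: list ordered by most recent request (most recent first);
     on a fault with a full cache the last element (least recently used) is evicted.
   - FIFO: list ordered by entry time (most recent entry first);
     on a fault with a full cache the last element (earliest entered) is evicted. *)

Definition insert_fault (k : nat) (p : nat) (c : seq nat) : seq nat :=
  p :: (if size c < k then c else take k.-1 c).

Definition lru_step (k : nat) (c : seq nat) (p : nat) : seq nat :=
  if p \in c then p :: rem p c else insert_fault k p c.

Definition fifo_step (k : nat) (c : seq nat) (p : nat) : seq nat :=
  if p \in c then c else insert_fault k p c.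

Fixpoint faults_from (step : seq nat -> nat -> seq nat) (c : seq nat) (I : seq nat) : nat :=
  match I with
  | [::] => 0
  | p :: I' => (p \notin c) + faults_from step (step c p) I'
  end.

Definition LRU (k : nat) (I : seq nat) : nat := faults_from (lru_step k) [::] I.
Definition FIFO (k : nat) (I : seq nat) : nat := faults_from (fifo_step k) [::] I.

Local Open Scope ring_scope.
Local Open Scope classical_set_scope.

Definition diff_set (R : realType) (A B : seq nat -> nat) (n : nat) : set R :=
  [set x | exists I : seq nat, size I = n /\ x = (A I)%:R - (B I)%:R].

(* Min_{A,B}(n) and Max_{A,B}(n) (the sets are finite, nonempty and bounded by n) *)
Definition MinAB (R : realType) (A B : seq nat -> nat) (n : nat) : R := inf (@diff_set R A B n).
Definition MaxAB (R : realType) (A B : seq nat -> nat) (n : nat) : R := sup (@diff_set R A B n).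

Definition RelMin (R : realType) (A B : seq nat -> nat) : \bar R :=
  limn_einf (fun n => (@MinAB R A B n / n%:R)%:E).
Definition RelMax (R : realType) (A B : seq nat -> nat) : \bar R :=
  limn_esup (fun n => (@MaxAB R A B n / n%:R)%:E).

From mathcomp Require Import all_boot all_order all_algebra.
From mathcomp Require Import all_classical all_reals all_analysis.
From mathcomp Require Import ring lra zify.
Import Order.TTheory GRing.Theory Num.Theory.
Set Implicit Arguments. Unset Strict Implicit. Unset Printing Implicit Defensive.

(* Run FIFO and LRU side by side on the same requests; until the caches fill
   up they hold the same pages. For a cache of size [k], two potential-function
   arguments bound the difference in faults:
   - requests that hit FIFO but fault LRU come in runs shorter than [k], since
     after [r] of them in a row the [r + 1] most recently used pages are all in
     FIFO's cache; the potential [k - 1 - r] gives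
     [k LRU(I) <= k FIFO(I) + (k - 1)(|I| + 1)];
   - mark the pages whose last request hit FIFO, and let [psi] count the pages
     of FIFO's queue from the newest one missing from LRU's cache down to the
     oldest one; the potential [(k - 1) #marked + psi] gives
     [(2k - 1) FIFO(I) <= (2k - 1) LRU(I) + (k - 1)|I|].
   Both bounds are attained up to [O(1)] by a window of [k] consecutive pages
   sliding up one page at a time: requesting each window in decreasing order
   makes LRU fault [k] times per FIFO fault, and requesting it followed by all
   of it but its lowest page makes FIFO fault [k] times per LRU fault. *)

Section SeqFacts.

Variable T : eqType.
Implicit Types (s : seq T) (p x y : T).

Lemma size_rem_cons s p : p \in s -> size (p :: rem p s) = size s.
Proof. by move=> ps; rewrite /= size_rem // prednK //; case: (s) ps. Qed.

Lemma mem_rem_cons s p : uniq s -> p \in s -> p :: rem p s =i s.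
Proof. by move=> us ps x; rewrite in_cons mem_rem_uniq // inE; case: eqP => // ->. Qed.

Lemma uniq_rem_cons s p : uniq s -> uniq (p :: rem p s).
Proof. by move=> us; rewrite /= mem_rem_uniqF // rem_uniq. Qed.

Lemma uniq_take_cons s p n : uniq s -> p \notin s -> uniq (p :: take n s).
Proof. by move=> us ps; rewrite /= take_uniq // andbT; apply: contra ps; apply: mem_take. Qed.

Lemma filter_in_pred0 (a : pred T) s : {in s, forall x, ~~ a x} -> [seq x <- s | a x] = [::].
Proof. by move=> h; rewrite -(eq_in_filter (a1 := pred0)) ?filter_pred0 // => x /h /negbTE. Qed.

Lemma index_inj_mem s x y : x \in s -> index y s = index x s -> y = x.
Proof. by move=> xs e; rewrite -(nth_index x xs) -e nth_index // -index_mem e index_mem. Qed.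

Lemma index_lt_cons s p x y : x != p ->
  (index y (p :: s) < index x (p :: s)) = (y == p) || (index y s < index x s).
Proof. by move=> xp /=; rewrite (eq_sym p x) (negbTE xp) (eq_sym p y); case: (y == p). Qed.

Lemma index_lt_take s n x y : x \in take n s ->
  (index y (take n s) < index x (take n s)) = (index y s < index x s).
Proof.
move=> xt; have xlt := xt; rewrite -index_mem in xlt.
have e z : index z s = if z \in take n s then index z (take n s)
    else size (take n s) + index z (drop n s).
  by rewrite -{1}(cat_take_drop n s) index_cat.
rewrite (e x) (e y) xt; case: ifP => yt //.
by rewrite (memNindex (negbT yt)); apply/idP/idP; lia.
Qed.

Lemma index_lt_rem s p x y : uniq s -> x != p -> y != p ->
  (index y (rem p s) < index x (rem p s)) = (index y s < index x s).
Proof.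
move=> us xp yp; have [ps|ps] := boolP (p \in s); last by rewrite rem_id.
case: (path.splitPr ps) us => s1 s2.
rewrite cat_uniq /= negb_or => /and3P [_ /andP [ps1 _] _].
have rem_mid : rem p (s1 ++ p :: s2) = s1 ++ s2.
  by elim: s1 ps1 => [|z s1 IH] /=; rewrite ?eqxx // in_cons negb_or eq_sym => /andP [/negbTE -> /IH ->].
rewrite rem_mid !index_cat /= (eq_sym p x) (eq_sym p y) (negbTE xp) (negbTE yp).
have := index_mem x s1; have := index_mem y s1.
by case: (x \in s1); case: (y \in s1) => hy hx; apply/idP/idP; lia.
Qed.

End SeqFacts.

Lemma find_take (T : Type) (a : pred T) n s : find a (take n s) = minn n (find a s).
Proof. by elim: s n => [|x s IH] [|n] //=; case: (a x) => //; rewrite IH minnSS. Qed.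

Lemma iota_rcons m n : iota m n.+1 = rcons (iota m n) (m + n).
Proof. by rewrite -addn1 iotaD cats1. Qed.

Lemma rev_iotaS m n : rev (iota m n.+1) = (m + n) :: rev (iota m n).
Proof. by rewrite iota_rcons rev_rcons. Qed.

Lemma rev_iota_uniq m n : uniq (rev (iota m n)).
Proof. by rewrite rev_uniq iota_uniq. Qed.

Lemma faults_from_cat step c s1 s2 :
  faults_from step c (s1 ++ s2) =
  faults_from step c s1 + faults_from step (foldl step c s1) s2.
Proof. by elim: s1 c => [|p s1 IH] c //=; rewrite IH addnA. Qed.

(** * FIFO and LRU side by side *)

Section Caches.

Variable k : nat.
Hypothesis k_gt0 : 0 < k.

Lemma insert_fault_take p c : size c <= k -> insert_fault k p c = p :: take k.-1 c.
Proof. by rewrite /insert_fault; case: ifP => // lt _; rewrite take_oversize //; lia. Qed.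

Lemma fifo_hit F p : p \in F -> fifo_step k F p = F.
Proof. by rewrite /fifo_step => ->. Qed.

Lemma fifo_miss F p : size F <= k -> p \notin F -> fifo_step k F p = p :: take k.-1 F.
Proof. by move=> sF pF; rewrite /fifo_step (negbTE pF) insert_fault_take. Qed.

Lemma lru_hit L p : p \in L -> lru_step k L p = p :: rem p L.
Proof. by rewrite /lru_step => ->. Qed.

Lemma lru_miss L p : size L <= k -> p \notin L -> lru_step k L p = p :: take k.-1 L.
Proof. by move=> sL pL; rewrite /lru_step (negbTE pL) insert_fault_take. Qed.

Variant fifo_lru_step_spec (F L : seq nat) (p : nat) :
    bool -> bool -> seq nat -> seq nat -> Type :=
  | StepHitHit of p \in F & p \in L :
      fifo_lru_step_spec F L p true true F (p :: rem p L)
  | StepHitMiss of p \in F & p \notin L :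
      fifo_lru_step_spec F L p true false F (p :: take k.-1 L)
  | StepMissHit of p \notin F & p \in L :
      fifo_lru_step_spec F L p false true (p :: take k.-1 F) (p :: rem p L)
  | StepMissMiss of p \notin F & p \notin L :
      fifo_lru_step_spec F L p false false (p :: take k.-1 F) (p :: take k.-1 L).

Lemma fifo_lru_stepP F L p : size F <= k -> size L <= k ->
  fifo_lru_step_spec F L p (p \in F) (p \in L) (fifo_step k F p) (lru_step k L p).
Proof.
move=> sF sL; have [pF|pF] := boolP (p \in F); have [pL|pL] := boolP (p \in L).
- by rewrite fifo_hit // lru_hit //; constructor.
- by rewrite fifo_hit // lru_miss //; constructor.
- by rewrite fifo_miss // lru_hit //; constructor.
- by rewrite fifo_miss // lru_miss //; constructor.
Qed.

Lemma fifo_step_mem F p : p \in fifo_step k F p.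
Proof. by rewrite /fifo_step /insert_fault; case: ifP => //; rewrite mem_head. Qed.

Lemma take1_lru_step L p : take 1 (lru_step k L p) = [:: p].
Proof. by rewrite /lru_step /insert_fault; case: ifP => _; rewrite /= take0. Qed.

Definition cache_pair (F L : seq nat) :=
  [/\ uniq F, uniq L, size F = size L, size L <= k & (size F < k -> F =i L)].

Lemma cache_pair0 : cache_pair [::] [::].
Proof. by []. Qed.

Lemma cache_pair_full F L p : cache_pair F L -> (p \in F) != (p \in L) -> size F = k.
Proof.
case=> _ _ sFL sL E pFL; have sF : size F <= k by rewrite sFL.
apply/eqP; rewrite eqn_leq sF leqNgt /=.
by apply: contraL pFL => /E ->; rewrite eqxx.
Qed.

Lemma cache_pair_has_notin F L p : cache_pair F L -> p \in L -> p \notin F ->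
  has (fun x => x \notin L) F.
Proof.
case=> uF _ sFL _ _ pL; apply: contraNT => /hasPn FL.
have sub : {subset F <= L} by move=> x /FL; rewrite negbK.
by have [_ ->] := uniq_min_size uF sub (eq_leq (esym sFL)).
Qed.

Lemma cache_pair_step F L p :
  cache_pair F L -> cache_pair (fifo_step k F p) (lru_step k L p).
Proof.
move=> P; have [uF uL sFL sL E] := P; have sF : size F <= k by rewrite sFL.
have full := cache_pair_full (p := p) P.
case: fifo_lru_stepP => // pF pL.
- split; rewrite ?uniq_rem_cons ?size_rem_cons //.
  by move=> /E FL x; rewrite mem_rem_cons // FL.
- have fF : size F = k by apply: full; rewrite pF (negbTE pL).
  split; rewrite ?uniq_take_cons //=.
  + by rewrite size_take_min -sFL fF; lia.
  + by rewrite size_take_min; lia.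
  + by rewrite fF ltnn.
- have fF : size F = k by apply: full; rewrite pL (negbTE pF).
  split; rewrite ?uniq_take_cons ?uniq_rem_cons //=.
  + by rewrite size_rem // size_take_min -sFL fF; lia.
  + by rewrite size_rem // -sFL fF; lia.
  + by rewrite size_take_min fF; lia.
- split; rewrite ?uniq_take_cons //=.
  + by rewrite !size_take_min sFL.
  + by rewrite size_take_min; lia.
  + rewrite size_take_min => lt; have hF : size F < k by lia.
    rewrite !take_oversize -?sFL; try lia.
    by move=> x; rewrite !in_cons (E hF).
Qed.

(* [r] counts the requests since the last one that was not a FIFO hit with an
   LRU fault; the [r + 1] most recently used pages are then all in FIFO's cache. *)
Definition recent_in_fifo (F L : seq nat) r :=
  (F = [::] /\ L = [::] /\ r = 0) \/
  [/\ r < k, r < size L & {subset take r.+1 L <= F}].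

Lemma lru_faults_le_from s : forall F L r, cache_pair F L -> recent_in_fifo F L r ->
  k * faults_from (lru_step k) L s <=
  k * faults_from (fifo_step k) F s + (k - 1) * size s + (k - 1 - r).
Proof.
elim: s => [|p s IH] F L r P Hr /=; first by rewrite !muln0.
have P' := cache_pair_step p P; have [uF uL sFL sL E] := P.
have sF : size F <= k by rewrite sFL.
have [/andP [pF pL] | nB] := boolP ((p \in F) && (p \notin L)).
- have fF : size F = k by apply: (cache_pair_full (p := p) P); rewrite pF (negbTE pL).
  have [[F0 _]|[rk rL sub]] := Hr; first by rewrite F0 in pF.
  have rk1 : r.+1 < k.
    rewrite ltn_neqAle rk andbT; apply: contra pL => /eqP er.
    have LF : {subset L <= F}.
      by move=> x xL; apply: sub; rewrite er take_oversize // -sFL fF.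
    by have [_ ->] := uniq_min_size uL LF (eq_leq sFL).
  have Hr' : recent_in_fifo (fifo_step k F p) (lru_step k L p) r.+1.
    rewrite fifo_hit // lru_miss //; right; split => //=.
      by rewrite size_takel; lia.
    rewrite take_takel; last by lia.
    by move=> x; rewrite in_cons => /orP [/eqP -> //|]; apply: sub.
  by have := IH _ _ r.+1 P' Hr'; rewrite pF pL /=; lia.
- have Hr' : recent_in_fifo (fifo_step k F p) (lru_step k L p) 0.
    right; split => //; first by rewrite /lru_step /insert_fault; case: ifP.
    by rewrite take1_lru_step => x; rewrite mem_seq1 => /eqP ->; apply: fifo_step_mem.
  have := IH _ _ 0 P' Hr'.
  by move: nB; case: (p \in F); case: (p \in L) => //= _; nia.
Qed.

Lemma lru_faults_le I : k * LRU k I <= k * FIFO k I + (k - 1) * (size I).+1.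
Proof.
have := lru_faults_le_from I cache_pair0 (or_introl (conj erefl (conj erefl erefl))).
by rewrite /LRU /FIFO subn0 mulnS; lia.
Qed.

Definition marked_step (F C : seq nat) (p : nat) := if p \in F then p :: rem p C else rem p C.

(* An unmarked page entered FIFO's cache at its last request, so a page that
   entered FIFO's cache after it has also been used more recently. *)
Definition marking_inv (F L C : seq nat) :=
  [/\ cache_pair F L, uniq C, (forall q : nat, q \in L -> q \notin F -> q \in C) &
   (forall x y : nat, x \in F -> x \notin C -> x \in L -> index y F < index x F ->
      index y L < index x L)].

Lemma marking_inv0 : marking_inv [::] [::] [::].
Proof. by []. Qed.

Lemma index_lt_evicted F (q y : nat) : size F = k -> q \in F -> q \notin take k.-1 F ->
  y \in F -> y != q -> index y F < index q F.
Proof.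
move=> sF qF qt yF yq.
have qk : k.-1 <= index q F by move: qt; rewrite in_take // -leqNgt.
have qlt := index_mem q F; have ylt := index_mem y F; rewrite qF yF sF in qlt ylt.
have /eqP : index y F != index q F.
  by apply: contra yq => /eqP /(index_inj_mem qF) ->.
by lia.
Qed.

Lemma index_evicted_ge F L (q : nat) : uniq F -> size F = k -> q \in F ->
  q \notin take k.-1 F -> q \in L ->
  (forall y, index y F < index q F -> index y L < index q L) -> k.-1 <= index q L.
Proof.
move=> uF sF qF qt qL J.
have sub : {subset rem q F <= take (index q L) L}.
  move=> y; rewrite mem_rem_uniq // inE => /andP [yq yF].
  have yqL := J y (index_lt_evicted sF qF qt yF yq).
  by rewrite in_take // -index_mem (ltn_trans yqL) // index_mem.
have := uniq_leq_size (rem_uniq q uF) sub.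
by rewrite size_rem // sF size_take_min; lia.
Qed.

Lemma marked_step_lru_only F L C (p : nat) : marking_inv F L C ->
  forall q, q \in lru_step k L p -> q \notin fifo_step k F p -> q \in marked_step F C p.
Proof.
case=> P uC J1 J2; have [uF uL sFL sL E] := P; have sF : size F <= k by rewrite sFL.
have remC x : x != p -> (x \in rem p C) = (x \in C).
  by move=> xp; rewrite mem_rem_uniq // inE xp.
rewrite /marked_step; case: fifo_lru_stepP => // pF pL q.
- rewrite !in_cons => /orP [/eqP -> | qL] qF; first by rewrite eqxx.
  have qp : q != p by apply/eqP => qp; rewrite qp pF in qF.
  by rewrite remC // (J1 _ (mem_rem qL) qF) orbT.
- rewrite !in_cons => /orP [/eqP -> | qL] qF; first by rewrite eqxx.
  have qp : q != p by apply/eqP => qp; rewrite qp pF in qF.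
  by rewrite remC // (J1 _ (mem_take qL) qF) orbT.
- rewrite !in_cons negb_or => /orP [/eqP -> | qL] /andP [qp qF]; first by rewrite eqxx in qp.
  have qL' := mem_rem qL; rewrite remC //.
  have [qF'|] := boolP (q \in F); last exact: J1.
  have fF : size F = k by apply: (cache_pair_full (p := p) P); rewrite pL (negbTE pF).
  (* If the page [q] evicted by FIFO were unmarked, all of FIFO's pages and [p]
     would be in LRU's cache: [k + 1] pages. *)
  apply: contraT => qC.
  have sub : {subset p :: F <= L}.
    move=> y; rewrite in_cons => /orP [/eqP -> // | yF].
    have [-> // | yq] := eqVneq y q.
    have := J2 q y qF' qC qL' (index_lt_evicted fF qF' qF yF yq).
    by rewrite -index_mem => /ltn_trans; apply; rewrite index_mem.
  have := uniq_leq_size (s1 := p :: F) _ sub.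
  by rewrite /= pF uF -sFL => /(_ isT); rewrite ltnn.
- rewrite !in_cons negb_or => /orP [/eqP -> | qL] /andP [qp qF]; first by rewrite eqxx in qp.
  have qL' := mem_take qL; rewrite remC //.
  have [qF'|] := boolP (q \in F); last exact: J1.
  have fF : size F = k.
    apply/eqP; rewrite eqn_leq sF leqNgt; apply: contra qF => lt.
    by rewrite take_oversize // -ltnS prednK.
  (* An unmarked [q] would be used less recently than the [k - 1] other pages
     of FIFO's cache, so LRU would evict it too. *)
  apply: contraT => qC.
  have := index_evicted_ge uF fF qF' qF qL' (fun y => J2 q y qF' qC qL').
  by move: qL; rewrite in_take //; lia.
Qed.

Lemma marked_step_order F L C (p : nat) : marking_inv F L C ->
  forall x y : nat, x \in fifo_step k F p -> x \notin marked_step F C p ->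
    x \in lru_step k L p ->
    index y (fifo_step k F p) < index x (fifo_step k F p) ->
    index y (lru_step k L p) < index x (lru_step k L p).
Proof.
case=> P uC J1 J2; have [uF uL sFL sL E] := P; have sF : size F <= k by rewrite sFL.
have remC x : x != p -> (x \in rem p C) = (x \in C).
  by move=> xp; rewrite mem_rem_uniq // inE xp.
rewrite /marked_step; case: fifo_lru_stepP => // pF pL x y.
- move=> xF; rewrite !in_cons negb_or => /andP [xp xC]; rewrite remC // in xC.
  rewrite (negbTE xp) /= => xL yx; rewrite index_lt_cons //.
  by case: eqVneq => //= yp; rewrite index_lt_rem // J2 // (mem_rem xL).
- move=> xF; rewrite !in_cons negb_or => /andP [xp xC]; rewrite remC // in xC.
  rewrite (negbTE xp) /= => xL yx; rewrite index_lt_cons //.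
  by case: eqVneq => //= yp; rewrite index_lt_take // J2 // (mem_take xL).
- rewrite in_cons => /orP [/eqP -> | xF]; first by rewrite /= eqxx.
  move=> xC; have [->|xp] := eqVneq x p; first by rewrite /= eqxx.
  rewrite remC // in xC; rewrite in_cons (negbTE xp) => xL.
  rewrite !index_lt_cons //; case: eqVneq => //= yp.
  by rewrite index_lt_take // index_lt_rem // => yx; rewrite J2 // ?(mem_take xF) ?(mem_rem xL).
- rewrite in_cons => /orP [/eqP -> | xF]; first by rewrite /= eqxx.
  move=> xC; have [->|xp] := eqVneq x p; first by rewrite /= eqxx.
  rewrite remC // in xC; rewrite in_cons (negbTE xp) => xL.
  rewrite !index_lt_cons //; case: eqVneq => //= yp.
  by rewrite !index_lt_take // => yx; rewrite J2 // ?(mem_take xF) ?(mem_take xL).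
Qed.

Lemma marking_inv_step F L C p : marking_inv F L C ->
  marking_inv (fifo_step k F p) (lru_step k L p) (marked_step F C p).
Proof.
move=> M; have [P uC _ _] := M; have [_ uL _ _ _] := P; split.
- exact: cache_pair_step.
- by rewrite /marked_step; case: ifP => _; rewrite ?uniq_rem_cons ?rem_uniq.
- exact: marked_step_lru_only.
- exact: marked_step_order.
Qed.

Definition unshared_suffix (F L : seq nat) := size F - find (fun x => x \notin L) F.

Lemma unshared_suffix_le F L : unshared_suffix F L <= size F.
Proof. exact: leq_subr. Qed.

Lemma unshared_suffix_gt0 F L : has (fun x => x \notin L) F -> 0 < unshared_suffix F L.
Proof. by rewrite /unshared_suffix has_find subn_gt0. Qed.

Lemma unshared_suffix_cons F L (p : nat) :
  unshared_suffix (p :: F) (p :: L) = unshared_suffix F (p :: L).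
Proof. by rewrite /unshared_suffix /= mem_head /= subSS. Qed.

Lemma eq_unshared_suffix F L L' : L =i L' -> unshared_suffix F L = unshared_suffix F L'.
Proof. by move=> e; rewrite /unshared_suffix (eq_find (a2 := fun x => x \notin L')) // => x; rewrite e. Qed.

Lemma unshared_suffix_take F L : size F = k -> has (fun x => x \notin L) F ->
  unshared_suffix (take k.-1 F) L = (unshared_suffix F L).-1.
Proof.
move=> sF hF; rewrite /unshared_suffix find_take size_take_min sF.
by have := find_size (fun x => x \notin L) F; rewrite has_find sF in hF; lia.
Qed.

Definition potential (F L C : seq nat) := (k - 1) * size C + unshared_suffix F L.

Lemma potential_step F L C (p : nat) : marking_inv F L C ->
  (2 * k - 1) * (p \notin F) + potential (fifo_step k F p) (lru_step k L p) (marked_step F C p)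
  <= (2 * k - 1) * (p \notin L) + (k - 1) + potential F L C.
Proof.
case=> P uC J1 _; have [uF uL sFL sL E] := P; have sF : size F <= k by rewrite sFL.
(* Stated at type [nat], so that [lia] matches it with the goals below. *)
have sremC : @size nat (rem p C) <= @size nat C.
  by have [pC|pC] := boolP (p \in C); [rewrite size_rem // leq_pred | rewrite rem_id].
have uF_le := unshared_suffix_le F L.
have mC := leq_mul (leqnn (k - 1)) sremC.
rewrite /potential /marked_step; case: fifo_lru_stepP => // pF pL /=.
- rewrite (eq_unshared_suffix F (mem_rem_cons uL pL)).
  by rewrite mulnS; lia.
- have fF : size F = k by apply: (cache_pair_full (p := p) P); rewrite pF (negbTE pL).
  have u_gt0 : 0 < unshared_suffix F L by apply/unshared_suffix_gt0/hasP; exists p.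
  have := unshared_suffix_le F (p :: take k.-1 L); rewrite mulnS fF; lia.
- have fF : size F = k by apply: (cache_pair_full (p := p) P); rewrite pL (negbTE pF).
  have pC : p \in C by apply: J1.
  have C_gt0 : 0 < @size nat C by case: (C) pC.
  have hF := cache_pair_has_notin P pL pF.
  rewrite unshared_suffix_cons (eq_unshared_suffix _ (mem_rem_cons uL pL)).
  rewrite unshared_suffix_take // size_rem // -subn1 mulnBr muln1.
  have := unshared_suffix_gt0 hF; have := leq_mul (leqnn (k - 1)) C_gt0.
  by set c := size C; lia.
- rewrite unshared_suffix_cons.
  have := unshared_suffix_le (take k.-1 F) (p :: take k.-1 L).
  rewrite size_take_min; nia.
Qed.

Lemma fifo_faults_le_from s : forall F L C, marking_inv F L C ->
  (2 * k - 1) * faults_from (fifo_step k) F s <=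
  (2 * k - 1) * faults_from (lru_step k) L s + (k - 1) * size s + potential F L C.
Proof.
elim: s => [|p s IH] F L C M /=; first by rewrite !muln0.
have := potential_step p M; have := IH _ _ _ (marking_inv_step p M).
set a := faults_from _ _ s; set b := faults_from _ _ s.
set u := nat_of_bool (p \notin F); set v := nat_of_bool (p \notin L).
by rewrite !mulnDr mulnS; lia.
Qed.

Lemma fifo_faults_le I : (2 * k - 1) * FIFO k I <= (2 * k - 1) * LRU k I + (k - 1) * size I.
Proof.
have := fifo_faults_le_from I marking_inv0.
by rewrite /potential /unshared_suffix /= muln0 sub0n !addn0.
Qed.

Definition inserts_on_miss (step : seq nat -> nat -> seq nat) :=
  forall c p, p \notin c -> step c p = insert_fault k p c.

Lemma fifo_inserts_on_miss : inserts_on_miss (fifo_step k).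
Proof. by move=> c p h; rewrite /fifo_step (negbTE h). Qed.

Lemma lru_inserts_on_miss : inserts_on_miss (lru_step k).
Proof. by move=> c p h; rewrite /lru_step (negbTE h). Qed.

Lemma faults_fill step c s : inserts_on_miss step -> uniq s ->
  all (fun p => p \notin c) s -> size c + size s <= k ->
  faults_from step c s = size s /\ foldl step c s = rev s ++ c.
Proof.
move=> ins; elim: s c => [|p s IH] c //= /andP [ps us] /andP [pc sc] sz.
rewrite pc ins // /insert_fault ifT; last by lia.
have sc' : all (fun x => x \notin p :: c) s.
  apply/allP => x xs; rewrite in_cons negb_or (allP sc x xs) andbT.
  by apply: contraNneq ps => <-.
have [-> ->] := IH (p :: c) us sc' ltac:(rewrite /=; lia).
by rewrite add1n rev_cons cat_rcons.
Qed.

Lemma faults_fill_nil step s : inserts_on_miss step -> uniq s -> size s <= k ->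
  faults_from step [::] s = size s /\ foldl step [::] s = rev s.
Proof.
move=> ins us sz; have new : all (fun p => p \notin ([::] : seq nat)) s by apply/allP.
by have [-> ->] := faults_fill ins us new sz; rewrite cats0.
Qed.

Lemma faults_shift_run step j : inserts_on_miss step -> forall n m, m + n = k ->
  faults_from step (iota (j.+1 + n) m ++ iota j n) (rev (iota j.+1 n)) = n /\
  foldl step (iota (j.+1 + n) m ++ iota j n) (rev (iota j.+1 n)) = iota j.+1 k.
Proof.
move=> ok; elim=> [|n IH] m e.
  by rewrite addn0 in e; rewrite e addn0 cats0.
rewrite rev_iotaS /=.
have nin : j.+1 + n \notin iota (j.+1 + n.+1) m ++ iota j n.+1.
  by rewrite mem_cat !mem_iota negb_or; apply/andP; split; apply/negP; lia.
have sz : size (iota (j.+1 + n.+1) m ++ iota j n.+1) <= k by rewrite size_cat !size_iota; lia.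
rewrite ok // (insert_fault_take _ sz).
have -> : (j.+1 + n) :: take k.-1 (iota (j.+1 + n.+1) m ++ iota j n.+1)
          = iota (j.+1 + n) m.+1 ++ iota j n.
  rewrite take_cat size_iota.
  have [lt|ge] := ltnP k.-1 m; first lia.
  rewrite /= addnS -addSn; congr (_ :: _ ++ _).
  have -> : k.-1 - m = n by lia.
  by rewrite -/(iota j n.+1) take_iota; congr iota; lia.
by have [-> ->] := IH m.+1 ltac:(lia); rewrite nin.
Qed.

Lemma fifo_all_hits F s : all (fun x => x \in F) s ->
  faults_from (fifo_step k) F s = 0 /\ foldl (fifo_step k) F s = F.
Proof.
elim: s => [|p s IH] //= /andP [pF h].
by rewrite pF (fifo_hit pF); have [-> ->] := IH h.
Qed.

Lemma lru_all_hits s : forall L, uniq L -> uniq s -> all (fun x => x \in L) s ->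
  faults_from (lru_step k) L s = 0 /\
  foldl (lru_step k) L s = rev s ++ [seq x <- L | x \notin s].
Proof.
elim: s => [|p s IH] L uL us /=.
  by move=> _; split => //; rewrite filter_predT.
move: us => /andP [ps us] /andP [pL h].
rewrite pL (lru_hit pL).
have uL' := uniq_rem_cons p uL.
have h' : all (fun x => x \in p :: rem p L) s.
  apply/allP => x xs; rewrite in_cons mem_rem_uniq // inE.
  have xp : x != p by apply: contraNneq ps => <-.
  by rewrite xp (allP h x xs) orbT.
have [-> ->] := IH _ uL' us h'; split => //.
rewrite rev_cons -cats1 -catA /= (negbTE ps); congr (_ ++ _ :: _).
rewrite rem_filter // -filter_predI; apply: eq_filter => x /=.
by rewrite in_cons negb_or andbC.
Qed.

End Caches.
(** * Witness sequences *)

Lemma lru_hits_rotate k a :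
  faults_from (lru_step k.+1) (a :: iota a.+1 k) (rev (iota a.+1 k)) = 0 /\
  foldl (lru_step k.+1) (a :: iota a.+1 k) (rev (iota a.+1 k)) = iota a.+1 k ++ [:: a].
Proof.
have u : uniq (a :: iota a.+1 k) by rewrite /= iota_uniq mem_iota; apply/negP; lia.
have h : all (fun x => x \in a :: iota a.+1 k) (rev (iota a.+1 k)).
  by apply/allP => x; rewrite mem_rev in_cons => ->; rewrite orbT.
have [-> ->] := lru_all_hits k.+1 u (rev_iota_uniq _ _) h; split => //.
rewrite revK /= mem_rev mem_iota.
have -> : a.+1 <= a = false by lia.
rewrite /=; congr (_ ++ _ :: _).
by apply: filter_in_pred0 => x; rewrite mem_rev => ->.
Qed.

Lemma lru_hits_restore k a :
  faults_from (lru_step k.+1) ((a + k) :: iota a k) (rev (iota a k)) = 0 /\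
  foldl (lru_step k.+1) ((a + k) :: iota a k) (rev (iota a k)) = iota a k.+1.
Proof.
have u : uniq ((a + k) :: iota a k) by rewrite /= iota_uniq mem_iota; apply/negP; lia.
have h : all (fun x => x \in (a + k) :: iota a k) (rev (iota a k)).
  by apply/allP => x; rewrite mem_rev in_cons => ->; rewrite orbT.
have [-> ->] := lru_all_hits k.+1 u (rev_iota_uniq _ _) h; split => //.
rewrite revK /= mem_rev mem_iota.
have -> : (a <= a + k < a + k) = false by lia.
rewrite /= filter_in_pred0; first by rewrite cats1 -iota_rcons.
by move=> x; rewrite mem_rev => ->.
Qed.

Definition min_witness k m := iota 0 k ++ rev (iota 0 k) ++ flatten [seq rev (iota j k) | j <- iota 1 m].

Lemma min_block_faults k j :
  (faults_from (fifo_step k.+1) (rev (iota j k.+1)) (rev (iota j.+1 k.+1)) = 1 /\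
   foldl (fifo_step k.+1) (rev (iota j k.+1)) (rev (iota j.+1 k.+1)) = rev (iota j.+1 k.+1)) /\
  (faults_from (lru_step k.+1) (iota j k.+1) (rev (iota j.+1 k.+1)) = k.+1 /\
   foldl (lru_step k.+1) (iota j k.+1) (rev (iota j.+1 k.+1)) = iota j.+1 k.+1).
Proof.
split; last first.
  exact: (faults_shift_run (ltn0Sn k) j (@lru_inserts_on_miss k.+1) (n := k.+1) (m := 0) erefl).
rewrite [rev (iota j.+1 _)]rev_iotaS /=.
have nin : j.+1 + k \notin rev (iota j k.+1) by rewrite mem_rev mem_iota; apply/negP; lia.
have sz : size (rev (iota j k.+1)) <= k.+1 by rewrite size_rev size_iota.
rewrite nin (fifo_miss (ltn0Sn k) sz nin) /=.
have -> : take k (rev (iota j k.+1)) = rev (iota j.+1 k).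
  by rewrite /= rev_cons -cats1 take_size_cat // size_rev size_iota.
rewrite -rev_iotaS.
have h : all (fun x => x \in rev (iota j.+1 k.+1)) (rev (iota j.+1 k)).
  by apply/allP => x; rewrite !mem_rev !mem_iota; lia.
by have [-> ->] := fifo_all_hits k.+1 h.
Qed.

Lemma min_blocks_faults k m : forall j,
  faults_from (fifo_step k.+1) (rev (iota j k.+1)) (flatten [seq rev (iota i k.+1) | i <- iota j.+1 m]) = m /\
  faults_from (lru_step k.+1) (iota j k.+1) (flatten [seq rev (iota i k.+1) | i <- iota j.+1 m]) = m * k.+1.
Proof.
elim: m => [|m IH] j //=.
rewrite !faults_from_cat.
have [[-> ->] [-> ->]] := min_block_faults k j.
by have [-> ->] := IH j.+1; rewrite mulSn add1n.
Qed.

Lemma size_min_blocks k m : forall j, size (flatten [seq rev (iota i k) | i <- iota j m]) = m * k.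
Proof. by elim: m => [|m IH] j //=; rewrite size_cat size_rev size_iota IH mulSn. Qed.

Lemma min_witness_spec k m :
  [/\ FIFO k.+1 (min_witness k.+1 m) = k.+1 + m,
      LRU k.+1 (min_witness k.+1 m) = k.+1 + m * k.+1 &
      size (min_witness k.+1 m) = m.+2 * k.+1].
Proof.
rewrite /FIFO /LRU /min_witness !faults_from_cat ?foldl_cat.
have sz : size (iota 0 k.+1) <= k.+1 by rewrite size_iota.
have [-> ->] := faults_fill_nil (ltn0Sn k) (@fifo_inserts_on_miss k.+1) (iota_uniq 0 k.+1) sz.
have [-> ->] := faults_fill_nil (ltn0Sn k) (@lru_inserts_on_miss k.+1) (iota_uniq 0 k.+1) sz.
have h : all (fun x => x \in rev (iota 0 k.+1)) (rev (iota 0 k.+1)).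
  by apply/allP => x.
have [-> ->] := fifo_all_hits k.+1 h.
have [-> ->] := lru_all_hits k.+1 (rev_iota_uniq _ _) (rev_iota_uniq _ _) h.
rewrite revK filter_in_pred0; last by move=> x ->.
rewrite cats0.
have [-> ->] := min_blocks_faults k m 0.
rewrite !size_cat size_rev size_iota size_min_blocks !mulSn; split => //; lia.
Qed.

Definition max_block k j := rev (iota j k) ++ rev (iota j.+1 k.-1).
Definition max_witness k m := flatten [seq max_block k j | j <- iota 0 m.+1].

Lemma fifo_all_hits_iota_tail k a :
  faults_from (fifo_step k.+1) (iota a k.+1) (rev (iota a.+1 k)) = 0 /\
  foldl (fifo_step k.+1) (iota a k.+1) (rev (iota a.+1 k)) = iota a k.+1.
Proof.
apply: fifo_all_hits; apply/allP => x; rewrite mem_rev !mem_iota; lia.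
Qed.

Lemma max_block0_faults k :
  (faults_from (fifo_step k.+1) [::] (max_block k.+1 0) = k.+1 /\
   foldl (fifo_step k.+1) [::] (max_block k.+1 0) = iota 0 k.+1) /\
  (faults_from (lru_step k.+1) [::] (max_block k.+1 0) = k.+1 /\
   foldl (lru_step k.+1) [::] (max_block k.+1 0) = iota 1 k ++ [:: 0]).
Proof.
rewrite /max_block !faults_from_cat !foldl_cat /=.
have sz : size (rev (iota 0 k.+1)) <= k.+1 by rewrite size_rev size_iota.
have [-> ->] := faults_fill_nil (ltn0Sn k) (@fifo_inserts_on_miss k.+1) (rev_iota_uniq 0 k.+1) sz.
have [-> ->] := faults_fill_nil (ltn0Sn k) (@lru_inserts_on_miss k.+1) (rev_iota_uniq 0 k.+1) sz.
rewrite size_rev size_iota revK.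
have [-> ->] := fifo_all_hits_iota_tail k 0.
by have [-> ->] := lru_hits_rotate k 0; rewrite !addn0.
Qed.

Lemma max_block_faults k j :
  (faults_from (fifo_step k.+1) (iota j k.+1) (max_block k.+1 j.+1) = k.+1 /\
   foldl (fifo_step k.+1) (iota j k.+1) (max_block k.+1 j.+1) = iota j.+1 k.+1) /\
  (faults_from (lru_step k.+1) (iota j.+1 k ++ [:: j]) (max_block k.+1 j.+1) = 1 /\
   foldl (lru_step k.+1) (iota j.+1 k ++ [:: j]) (max_block k.+1 j.+1) = iota j.+2 k ++ [:: j.+1]).
Proof.
rewrite /max_block !faults_from_cat !foldl_cat -[k.+1.-1]/k; split.
  have := faults_shift_run (ltn0Sn k) j (@fifo_inserts_on_miss k.+1) (n := k.+1) (m := 0) erefl.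
  rewrite /= => -[-> ->].
  by have [-> ->] := fifo_all_hits_iota_tail k j.+1; rewrite addn0.
rewrite [rev (iota j.+1 _)]rev_iotaS /=.
have nin : j.+1 + k \notin iota j.+1 k ++ [:: j].
  by rewrite mem_cat mem_iota in_cons in_nil orbF negb_or; apply/andP; split; apply/negP; lia.
have sz : size (iota j.+1 k ++ [:: j]) <= k.+1 by rewrite size_cat size_iota addn1.
rewrite nin (lru_miss (ltn0Sn k) sz nin) take_size_cat ?size_iota //.
have [-> ->] := lru_hits_restore k j.+1.
by have [-> ->] := lru_hits_rotate k j.+1.
Qed.

Lemma max_blocks_faults k m : forall j,
  faults_from (fifo_step k.+1) (iota j k.+1) (flatten [seq max_block k.+1 i | i <- iota j.+1 m]) = m * k.+1 /\
  faults_from (lru_step k.+1) (iota j.+1 k ++ [:: j]) (flatten [seq max_block k.+1 i | i <- iota j.+1 m]) = m.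
Proof.
elim: m => [|m IH] j; first by [].
have e : flatten [seq max_block k.+1 i | i <- iota j.+1 m.+1] =
   max_block k.+1 j.+1 ++ flatten [seq max_block k.+1 i | i <- iota j.+2 m] by [].
rewrite e !(faults_from_cat _ _ (max_block k.+1 j.+1)).
have [[-> ->] [-> ->]] := max_block_faults k j.
by have [-> ->] := IH j.+1; rewrite mulSn add1n.
Qed.

Lemma size_max_blocks k m : forall j, size (flatten [seq max_block k.+1 i | i <- iota j m]) = m * (k.+1 + k).
Proof. by elim: m => [|m IH] j //=; rewrite size_cat /max_block size_cat !size_rev !size_iota IH mulSn. Qed.

Lemma max_witness_spec k m :
  [/\ FIFO k.+1 (max_witness k.+1 m) = k.+1 + m * k.+1,
      LRU k.+1 (max_witness k.+1 m) = k.+1 + m &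
      size (max_witness k.+1 m) = m.+1 * k.*2.+1].
Proof.
have e : max_witness k.+1 m = max_block k.+1 0 ++ flatten [seq max_block k.+1 i | i <- iota 1 m] by [].
rewrite /FIFO /LRU e !(faults_from_cat _ _ (max_block k.+1 0)).
have [[-> ->] [-> ->]] := max_block0_faults k.
have [-> ->] := max_blocks_faults k m 0.
rewrite size_cat size_max_blocks /max_block size_cat !size_rev !size_iota mulSn.
by rewrite -addnn addSn.
Qed.

Local Open Scope ring_scope.
Local Open Scope classical_set_scope.

(** * Relative interval *)

Section RealSequences.

Variable R : realType.

Lemma limn_esup_EFin (v : nat -> R) (r : R) :
  (forall e : R, 0 < e -> exists N, forall n, (N <= n)%N -> v n <= r + e) ->
  (forall e : R, 0 < e -> forall N, exists2 n, (N <= n)%N & r - e <= v n) ->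
  limn_esup (fun n => (v n)%:E) = r%:E.
Proof.
move=> hub hlb; rewrite limn_esup_lim.
have -> : limn (esups (fun n => (v n)%:E)) = ereal_inf (range (esups (fun n => (v n)%:E))).
  by apply/cvg_lim => //; exact: cvg_esups_inf.
apply/eqP; rewrite eq_le; apply/andP; split.
- apply/lee_addgt0Pr => e e0; have [N hN] := hub e e0.
  apply: (le_trans (ereal_inf_lbound _)); first by exists N.
  apply: ge_ereal_sup => _ [n /= Nn <-].
  by rewrite -EFinD lee_fin; apply: hN.
- apply: le_ereal_inf_tmp => _ [N _ <-].
  apply/lee_subgt0Pr => e e0; have [n Nn hn] := hlb e e0 N.
  apply: le_ereal_sup_tmp; exists (v n)%:E; first by exists n.
  by rewrite -EFinB lee_fin.
Qed.

Lemma div_nat_le_eventually (c e : R) : 0 < e ->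
  exists N, forall n, (N <= n)%N -> c / n%:R <= e.
Proof.
move=> e0; have := @archi_boundP R (`|c| / e) (divr_ge0 (normr_ge0 c) (ltW e0)).
set N := Num.Def.archi_bound _ => cN; exists N.+1 => n Nn.
have n0 : 0 < n%:R :> R by rewrite ltr0n; lia.
have : `|c| / e < n%:R by apply: (lt_le_trans cN); rewrite ler_nat; lia.
rewrite ltr_pdivrMr // ler_pdivrMr // mulrC => /ltW; exact/le_trans/ler_norm.
Qed.

Lemma limn_esup_squeeze (v : nat -> R) (r c d : R) :
  (forall n, (0 < n)%N -> v n <= r + c / n%:R) ->
  (forall N, exists2 n, (N <= n)%N & r - d / n%:R <= v n) ->
  limn_esup (fun n => (v n)%:E) = r%:E.
Proof.
move=> hub hlb; apply: limn_esup_EFin => e e0.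
  have [N hN] := div_nat_le_eventually c e0; exists N.+1 => n Nn.
  by apply: (le_trans (hub n _)); [lia | rewrite lerD2l; apply: hN; lia].
move=> N; have [M hM] := div_nat_le_eventually d e0.
have [n Nn hn] := hlb (maxn N M); exists n; first by lia.
by apply: le_trans hn; rewrite lerD2l lerN2; apply: hM; lia.
Qed.

End RealSequences.

Section RelativeInterval.

Variables (R : realType) (A B : seq nat -> nat).

Lemma diff_set_neq0 n : @diff_set R A B n !=set0.
Proof. by exists ((A (nseq n 0%N))%:R - (B (nseq n 0%N))%:R); exists (nseq n 0%N); rewrite size_nseq. Qed.

Section LowerBound.

Variables (lo : nat -> R) (lo_le : forall I, lo (size I) <= ((A I)%:R - (B I)%:R)).

Lemma MinAB_ge n : lo n <= @MinAB R A B n.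
Proof. by apply: lb_le_inf (diff_set_neq0 n) _ => _ [I [<- ->]]; apply: lo_le. Qed.

Lemma MinAB_le I : @MinAB R A B (size I) <= ((A I)%:R - (B I)%:R).
Proof. by apply: ge_inf; [exists (lo (size I)) => _ [J [<- ->]]; exact: lo_le | exists I]. Qed.

End LowerBound.

Section UpperBound.

Variables (hi : nat -> R) (le_hi : forall I, ((A I)%:R - (B I)%:R) <= hi (size I)).

Lemma MaxAB_le n : @MaxAB R A B n <= hi n.
Proof. by apply: ge_sup (diff_set_neq0 n) _ => _ [I [<- ->]]; apply: le_hi. Qed.

Lemma MaxAB_ge I : ((A I)%:R - (B I)%:R) <= @MaxAB R A B (size I).
Proof. by apply: ub_le_sup; [exists (hi (size I)) => _ [J [<- ->]]; exact: le_hi | exists I]. Qed.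

End UpperBound.

End RelativeInterval.

Section FifoLruInterval.

Variables (R : realType) (k : nat).

Let K0 : (0 : R) < k.+1%:R. Proof. by rewrite ltr0n. Qed.
Let D0 : (0 : R) < k.*2.+1%:R. Proof. by rewrite ltr0n. Qed.

Lemma FIFO_sub_LRU_ge I :
  - (k%:R / k.+1%:R * (size I).+1%:R) <= (FIFO k.+1 I)%:R - (LRU k.+1 I)%:R :> R.
Proof.
have := lru_faults_le (ltn0Sn k) I; rewrite subSS subn0 -(ler_nat R) !natrD !natrM.
rewrite mulrAC -mulNr ler_pdivrMr // => h; lra.
Qed.

Lemma FIFO_sub_LRU_le I :
  (FIFO k.+1 I)%:R - (LRU k.+1 I)%:R <= k%:R / k.*2.+1%:R * (size I)%:R :> R.
Proof.
have := fifo_faults_le (ltn0Sn k) I.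
have -> : (2 * k.+1 - 1 = k.*2.+1)%N by lia.
rewrite subSS subn0 -(ler_nat R) !natrD !natrM mulrAC ler_pdivlMr // => h; lra.
Qed.

Lemma RelMin_FIFO_LRU : @RelMin R (FIFO k.+1) (LRU k.+1) = (- (k%:R / k.+1%:R))%:E.
Proof.
set r : R := k%:R / k.+1%:R.
have rK : r * k.+1%:R = k%:R by rewrite /r mulfVK // gt_eqF.
rewrite /RelMin.
rewrite -[limn_einf _]/(- limn_esup (fun n => (- (@MinAB R (FIFO k.+1) (LRU k.+1) n / n%:R))%:E))%E.
rewrite (@limn_esup_squeeze _ _ r r (2 * k%:R)) // => [n n0 | N].
  have n0R : (0 : R) < n%:R by rewrite ltr0n.
  have := MinAB_ge (lo := fun n => - (r * n.+1%:R)) FIFO_sub_LRU_ge n.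
  set a := MinAB _ _ _ _ => ha.
  rewrite -mulNr ler_pdivrMr // mulrDl divfK ?gt_eqF //.
  by rewrite -natr1 mulrDr mulr1 in ha; lra.
(* The witness of length [n = (N + 2)(k + 1)] has [FIFO - LRU = -N k = -(r n - 2 k)]. *)
have [F_ L_ S_] := min_witness_spec k N.
exists (size (min_witness k.+1 N)); first by rewrite S_; nia.
have := MinAB_le (lo := fun n => - (r * n.+1%:R)) FIFO_sub_LRU_ge (min_witness k.+1 N).
rewrite F_ L_ S_; set a := MinAB _ _ _ _ => ha.
have nR : (0 : R) < (N.+2 * k.+1)%:R by rewrite ltr0n.
rewrite -[X in _ <= X]mulNr ler_pdivlMr // mulrBl divfK ?gt_eqF //.
rewrite natrM mulrCA rK; rewrite !natrD natrM in ha.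
have kS : (k.+1%:R : R) = k%:R + 1 by rewrite -natr1.
have N2 : (N.+2%:R : R) = N%:R + 2 by rewrite -addn2 natrD.
rewrite kS N2 in ha *; nra.
Qed.

Lemma RelMax_FIFO_LRU : @RelMax R (FIFO k.+1) (LRU k.+1) = (k%:R / k.*2.+1%:R)%:E.
Proof.
set r : R := k%:R / k.*2.+1%:R.
have rK : r * k.*2.+1%:R = k%:R by rewrite /r mulfVK // gt_eqF.
rewrite /RelMax (@limn_esup_squeeze _ _ r 0 k%:R) // => [n n0 | N].
  have n0R : (0 : R) < n%:R by rewrite ltr0n.
  have := MaxAB_le (hi := fun n => r * n%:R) FIFO_sub_LRU_le n.
  by rewrite mul0r addr0 ler_pdivrMr.
(* The witness of length [n = (N + 1)(2 k + 1)] has [FIFO - LRU = N k = r n - k]. *)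
have [F_ L_ S_] := max_witness_spec k N.
exists (size (max_witness k.+1 N)); first by rewrite S_; nia.
have := MaxAB_ge (hi := fun n => r * n%:R) FIFO_sub_LRU_le (max_witness k.+1 N).
rewrite F_ L_ S_; set a := MaxAB _ _ _ _ => ha.
have nR : (0 : R) < (N.+1 * k.*2.+1)%:R by rewrite ltr0n.
rewrite ler_pdivlMr // mulrBl divfK ?gt_eqF //.
rewrite natrM mulrA (mulrC r) -mulrA rK !natrD !natrM -!natr1 /= in ha *; nra.
Qed.

End FifoLruInterval.

Theorem theorem1 (R : realType) (k : nat) (hk : (1 <= k)%N) :
  @RelMin R (FIFO k) (LRU k) = (-1 + 1 / k%:R : R)%:E /\
  @RelMax R (FIFO k) (LRU k) = (1 / 2 - 1 / (4 * k%:R - 2) : R)%:E.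
Proof.
case: k hk => // k _; rewrite RelMin_FIFO_LRU RelMax_FIFO_LRU.
have k0 : (0 : R) <= k%:R by [].
rewrite -natr1 -muln2 -addn1 !natrD natrM; split; congr EFin; field; lra.
Qed.
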